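(* The functor $\partial\mathrm{Gelf}\colon\mathsf{C^*}^{\mathrm{op}}\to\mathsf{Set}$, together with the identity natural transformation $\partial\mathrm{Gelf}|_{\mathsf{CommC^*}^{\mathrm{op}}}\to\operatorname{Gelf}$, is the right Kan extension of $\operatorname{Gelf}\colon\mathsf{CommC^*}^{\mathrm{op}}\to\mathsf{Set}$ along the inclusion $\mathsf{CommC^*}^{\mathrm{op}}\subseteq\mathsf{C^*}^{\mathrm{op}}$: for every functor $F\colon\mathsf{C^*}^{\mathrm{op}}\to\mathsf{Set}$ and natural transformation $\eta\colon F|_{\mathsf{CommC^*}^{\mathrm{op}}}\to\operatorname{Gelf}$ there is a unique natural transformation $\delta\colon F\to\partial\mathrm{Gelf}$ whose restriction to $\mathsf{CommC^*}^{\mathrm{op}}$ is $\eta$. In particular, $\partial\mathrm{Gelf}$ is a terminal object of the category $r^{-1}(\operatorname{Gelf})$.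
   Context: $\mathsf{C^*}$ is the category of unital $C^*$-algebras with identity-preserving $*$-homomorphisms, and $\mathsf{CommC^*}$ its full subcategory of commutative ones. $\operatorname{Gelf}(A)$ is the set of maximal ideals of a commutative unital $C^*$-algebra $A$, with $\operatorname{Gelf}(f)(M)=f^{-1}(M)$. For a unital $C^*$-algebra $A$, let $N(A)=\{a\in A: aa^*=a^*a\}$. A partial maximal ideal of $A$ is a subset $I\subseteq N(A)$ such that for every commutative $C^*$-subalgebra $C\subseteq A$ (closed, $*$-invariant, containing $1$), $I\cap C$ is a maximal ideal of $C$. $\partial\mathrm{Gelf}(A)$ is the set of partial maximal ideals of $A$, and for a morphism $f\colon A\to B$, $\partial\mathrm{Gelf}(f)(M)=f^{-1}(M)\cap N(A)$; on commutative algebras $\partial\mathrm{Gelf}=\operatorname{Gelf}$. The category $r^{-1}(\operatorname{Gelf})$ has objects pairs $(F,\phi)$ with $F\colon\mathsf{C^*}^{\mathrm{op}}\to\mathsf{Set}$ and $\phi\colon F|_{\mathsf{CommC^*}^{\mathrm{op}}}\to\operatorname{Gelf}$ a natural isomorphism; morphisms $(F,\phi)\to(F',\phi')$ are natural transformations $\psi\colon F\to F'$ with $\phi'\circ\psi|_{\mathsf{CommC^*}^{\mathrm{op}}}=\phi$. *)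

From HB Require Import structures.
From mathcomp Require Import all_boot all_order all_algebra complex.
From mathcomp Require Import boolp classical_sets reals.
Set Implicit Arguments. Unset Strict Implicit. Unset Printing Implicit Defensive.
Import Order.TTheory GRing.Theory Num.Theory.
Local Open Scope ring_scope.
Local Open Scope classical_set_scope.

(* The zero algebra (1 = 0) is allowed, as in the category C*.                *)
Record cstar (R : realType) := CStar {
  car :> lmodType R[i];
  cmul : car -> car -> car;
  cone : car;
  cinv : car -> car;             (* the involution x |-> x^* *)
  cnorm : car -> R;
  cmulA : forall x y z, cmul x (cmul y z) = cmul (cmul x y) z;
  cmul1l : forall x, cmul cone x = x;
  cmul1r : forall x, cmul x cone = x;
  cmulDl : forall x y z, cmul (x + y) z = cmul x z + cmul y z;
  cmulDr : forall x y z, cmul x (y + z) = cmul x y + cmul x z;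
  cmulZl : forall (c : R[i]) x y, cmul (c *: x) y = c *: cmul x y;
  cmulZr : forall (c : R[i]) x y, cmul x (c *: y) = c *: cmul x y;
  cinvD : forall x y, cinv (x + y) = cinv x + cinv y;
  cinvZ : forall (c : R[i]) x, cinv (c *: x) = c^* *: cinv x;
  cinvK : forall x, cinv (cinv x) = x;
  cinvM : forall x y, cinv (cmul x y) = cmul (cinv y) (cinv x);
  cnorm_eq0 : forall x, cnorm x = 0 -> x = 0;
  cnormD : forall x y, cnorm (x + y) <= cnorm x + cnorm y;
  cnormZ : forall (c : R[i]) x, cnorm (c *: x) = Normc.normc c * cnorm x;
  cnormM : forall x y, cnorm (cmul x y) <= cnorm x * cnorm y;
  cnorm_cstar : forall x, cnorm (cmul (cinv x) x) = cnorm x ^+ 2;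
  ccomplete : forall u : nat -> car,
    (forall e : R, 0 < e -> exists N, forall m n, (N <= m)%N -> (N <= n)%N ->
        cnorm (u m - u n) < e) ->
    exists l, forall e : R, 0 < e -> exists N, forall n, (N <= n)%N ->
        cnorm (u n - l) < e
}.

Section CStarDefs.
Context {R : realType}.

Definition is_chom (A B : cstar R) (f : A -> B) : Prop :=
  [/\ (forall x y, f (x + y) = f x + f y),
      (forall (c : R[i]) x, f (c *: x) = c *: f x),
      (forall x y, f (cmul x y) = cmul (f x) (f y)),
      f (cone A) = cone B &
      (forall x, f (cinv x) = cinv (f x))].

Definition chom (A B : cstar R) := {f : A -> B | is_chom f}.

Definition chom_fun (A B : cstar R) (f : chom A B) : A -> B := proj1_sig f.

Lemma is_chom_id (A : cstar R) : is_chom (@id A).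
Proof. by split. Qed.

Definition chom_id (A : cstar R) : chom A A := exist _ (@id A) (is_chom_id A).

Lemma is_chom_comp (A B C : cstar R) (g : chom B C) (f : chom A B) :
  is_chom (chom_fun g \o chom_fun f).
Proof.
case: g => g [g1 g2 g3 g4 g5]; case: f => f [f1 f2 f3 f4 f5]; split => /=.
- by move=> x y; rewrite f1 g1.
- by move=> c x; rewrite f2 g2.
- by move=> x y; rewrite f3 g3.
- by rewrite f4 g4.
- by move=> x; rewrite f5 g5.
Qed.

Definition chom_comp (A B C : cstar R) (g : chom B C) (f : chom A B) : chom A C :=
  exist _ (chom_fun g \o chom_fun f) (is_chom_comp g f).

Definition ccommutative (A : cstar R) : Prop := forall x y : A, cmul x y = cmul y x.

Definition normal_elts (A : cstar R) : set A :=
  [set a | cmul a (cinv a) = cmul (cinv a) a].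

Definition comm_subalg (A : cstar R) (C : set A) : Prop :=
  C (cone A) /\
  (forall x y, C x -> C y -> C (x + y)) /\
  (forall (c : R[i]) x, C x -> C (c *: x)) /\
  (forall x y, C x -> C y -> C (cmul x y)) /\
  (forall x, C x -> C (cinv x)) /\
  (forall (u : nat -> A) l, (forall n, C (u n)) ->
     (forall e : R, 0 < e -> exists N, forall n, (N <= n)%N -> cnorm (u n - l) < e) ->
     C l) /\
  (forall x y, C x -> C y -> cmul x y = cmul y x).

Definition is_ideal_of (A : cstar R) (C : set A) (I : set A) : Prop :=
  [/\ I `<=` C, I 0,
      (forall x y, I x -> I y -> I (x - y)),
      (forall c x, C c -> I x -> I (cmul c x)) &
      (forall c x, C c -> I x -> I (cmul x c))].

Definition is_max_ideal_of (A : cstar R) (C : set A) (M : set A) : Prop :=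
  [/\ is_ideal_of C M, M <> C &
      (forall J, is_ideal_of C J -> M `<=` J -> J = M \/ J = C)].

Definition is_max_ideal (A : cstar R) (M : set A) : Prop :=
  is_max_ideal_of [set: A] M.

Definition is_partial_max_ideal (A : cstar R) (I : set A) : Prop :=
  I `<=` @normal_elts A /\
  forall C : set A, comm_subalg C -> is_max_ideal_of C (I `&` C).

Record cfunctor := CFunctor {
  Fobj : cstar R -> Type;
  Fmap : forall A B : cstar R, chom A B -> Fobj B -> Fobj A;
  Fmap_id : forall (A : cstar R) (x : Fobj A), Fmap (chom_id A) x = x;
  Fmap_comp : forall (A B C : cstar R) (f : chom A B) (g : chom B C) (x : Fobj C),
      Fmap (chom_comp g f) x = Fmap f (Fmap g x)
}.

Definition nat_to_Gelf (F : cfunctor)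
    (eta : forall A : cstar R, ccommutative A -> Fobj F A -> {M : set A | is_max_ideal M})
    : Prop :=
  forall (A B : cstar R) (hA : ccommutative A) (hB : ccommutative B)
         (f : chom A B) (y : Fobj F B),
    proj1_sig (eta A hA (Fmap f y)) = chom_fun f @^-1` proj1_sig (eta B hB y).

(* natural transformations F -> dGelf, where
   dGelf(f)(M) = f^{-1}(M) intersected with N(A) *)
Definition nat_to_dGelf (F : cfunctor)
    (delta : forall A : cstar R, Fobj F A -> {I : set A | is_partial_max_ideal I})
    : Prop :=
  forall (A B : cstar R) (f : chom A B) (y : Fobj F B),
    proj1_sig (delta A (Fmap f y)) =
      (chom_fun f @^-1` proj1_sig (delta B y)) `&` @normal_elts A.

End CStarDefs.

From HB Require Import structures.
From mathcomp Require Import all_boot all_order all_algebra complex.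
From mathcomp Require Import boolp classical_sets reals.
From mathcomp Require Import lra.
Set Implicit Arguments. Unset Strict Implicit. Unset Printing Implicit Defensive.
Import Order.TTheory GRing.Theory Num.Theory.
Local Open Scope ring_scope.
Local Open Scope classical_set_scope.

(* A partial maximal ideal of A is determined by its traces on the commutative
   C*-subalgebras C of A, since every normal element lies in one (the closure
   of the *-algebra it generates).  Naturality along the inclusion C -> A
   forces the trace of delta_A(x) on C to be the maximal ideal
   eta_C(F(C -> A) x), so delta is unique.  Conversely, naturality of eta
   along C ∩ D -> C and C ∩ D -> D makes these maximal ideals agree on
   overlaps, so their union is a partial maximal ideal; naturality of this
   delta along f : A -> B reduces to naturality of eta along the restriction
   of f from C to the closure of f(C), again a commutative C*-subalgebra. *)

Section Arithmetic.
Context {R : realType} (A : cstar R).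
Implicit Types x y z : A.

Lemma normc_ge0 (c : R[i]) : 0 <= Normc.normc c.
Proof. by case: c => a b; rewrite /Normc.normc sqrtr_ge0. Qed.

Lemma cnorm0 : cnorm (0 : A) = 0.
Proof. by rewrite -(scale0r (0 : A)) cnormZ Normc.normc0 mul0r. Qed.

Lemma cnormN x : cnorm (- x) = cnorm x.
Proof. by rewrite -scaleN1r cnormZ normcN Normc.normc1 mul1r. Qed.

Lemma cnorm_ge0 x : 0 <= cnorm x.
Proof. by have := cnormD x (- x); rewrite subrr cnorm0 cnormN => h; lra. Qed.

Lemma cnorm_tri x y z : cnorm (x - z) <= cnorm (x - y) + cnorm (y - z).
Proof.
have -> : x - z = (x - y) + (y - z) by rewrite addrA subrK.
exact: cnormD.
Qed.

Lemma eq0_cnorm_small x : (forall e : R, 0 < e -> cnorm x < e) -> x = 0.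
Proof.
move=> small; apply: cnorm_eq0; apply/le_anti; rewrite cnorm_ge0 andbT.
by rewrite leNgt; apply/negP => /small; rewrite ltxx.
Qed.

Lemma cinv0 : cinv (0 : A) = 0.
Proof. by apply: (@addrI _ (cinv (0 : A))); rewrite -cinvD !addr0. Qed.

Lemma cinvN x : cinv (- x) = - cinv x.
Proof. by apply/eqP; rewrite -subr_eq0 opprK -cinvD addNr cinv0. Qed.

Lemma cinvB x y : cinv (x - y) = cinv x - cinv y.
Proof. by rewrite cinvD cinvN. Qed.

Lemma cnorm_le_cinv x : cnorm x <= cnorm (cinv x).
Proof.
have [x0|x_neq0] := eqVneq (cnorm x) 0; first by rewrite x0 cnorm_ge0.
have x_gt0 : 0 < cnorm x by rewrite lt_def x_neq0 cnorm_ge0.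
by have := cnormM (cinv x) x; rewrite cnorm_cstar expr2 ler_pM2r.
Qed.

Lemma cnorm_cinv x : cnorm (cinv x) = cnorm x.
Proof.
apply/le_anti; rewrite cnorm_le_cinv andbT.
by have := cnorm_le_cinv (cinv x); rewrite cinvK.
Qed.

Lemma cmulBl x y z : cmul (x - y) z = cmul x z - cmul y z.
Proof. by rewrite cmulDl -scaleN1r cmulZl scaleN1r. Qed.

Lemma cmulBr x y z : cmul z (x - y) = cmul z x - cmul z y.
Proof. by rewrite cmulDr -scaleN1r cmulZr scaleN1r. Qed.

End Arithmetic.

Section Subalgebras.
Context {R : realType} (A : cstar R).
Implicit Types (x y : A) (C D T : set A).

Record star_subalg T : Prop := StarSubalg {
  star_subalg1 : T (cone A);
  star_subalgD : forall x y, T x -> T y -> T (x + y);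
  star_subalgZ : forall (c : R[i]) x, T x -> T (c *: x);
  star_subalgM : forall x y, T x -> T y -> T (cmul x y);
  star_subalg_inv : forall x, T x -> T (cinv x) }.

Definition lim_closed T : Prop :=
  forall (u : nat -> A) l, (forall n, T (u n)) ->
    (forall e : R, 0 < e -> exists N, forall n, (N <= n)%N -> cnorm (u n - l) < e) ->
    T l.

Definition commuting T : Prop := forall x y, T x -> T y -> cmul x y = cmul y x.

Lemma comm_subalgE T :
  comm_subalg T <-> [/\ star_subalg T, lim_closed T & commuting T].
Proof.
split=> [[T1 [TD [TZ [TM [TI [TL Tc]]]]]] | [[T1 TD TZ TM TI] TL Tc]].
  by split=> //; split.
by do 6 split=> //.
Qed.

Lemma star_subalg0 T : star_subalg T -> T 0.
Proof. by move=> hT; have := star_subalgZ hT 0 (star_subalg1 hT); rewrite scale0r. Qed.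

Lemma star_subalgN T x : star_subalg T -> T x -> T (- x).
Proof. by move=> hT Tx; rewrite -scaleN1r; apply: star_subalgZ. Qed.

Lemma comm_subalg_normal C a : comm_subalg C -> C a -> @normal_elts _ A a.
Proof.
case/comm_subalgE => hC _ Cc Ca; rewrite /normal_elts /=.
apply: Cc => //; exact: (star_subalg_inv hC Ca).
Qed.

Lemma comm_subalgT : ccommutative A -> @comm_subalg _ A [set: A].
Proof. by move=> hA; do 6 split=> //. Qed.

Lemma comm_subalgI C D : comm_subalg C -> comm_subalg D -> comm_subalg (C `&` D).
Proof.
move=> /comm_subalgE[[C1 CD CZ CM CI] CL Cc] /comm_subalgE[[D1 DD DZ DM DI] DL _].
apply/comm_subalgE; split; first split.
- by [].
- by move=> x y [Cx Dx] [Cy Dy]; split; [apply: CD | apply: DD].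
- by move=> c x [Cx Dx]; split; [apply: CZ | apply: DZ].
- by move=> x y [Cx Dx] [Cy Dy]; split; [apply: CM | apply: DM].
- by move=> x [Cx Dx]; split; [apply: CI | apply: DI].
- move=> u l Iu ul.
  have [Cu Du] : (forall n, C (u n)) /\ (forall n, D (u n)).
    by split=> n; case: (Iu n).
  by split; [apply: (CL u l Cu ul) | apply: (DL u l Du ul)].
- by move=> x y [Cx _] [Cy _]; apply: Cc.
Qed.

End Subalgebras.

Section Closure.
Context {R : realType} (A : cstar R).
Implicit Types (x y : A) (S : set A).

Definition norm_closure S : set A :=
  [set l | forall e : R, 0 < e -> exists2 s, S s & cnorm (s - l) < e].

Lemma sub_norm_closure S : S `<=` norm_closure S.
Proof. by move=> x Sx e e0; exists x => //; rewrite subrr cnorm0. Qed.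

Lemma norm_closure_mul_approx S x y :
  norm_closure S x -> norm_closure S y -> forall e : R, 0 < e ->
  exists s t, [/\ S s, S t, cnorm (cmul s t - cmul x y) < e &
                 cnorm (cmul t s - cmul y x) < e].
Proof.
move=> Sx Sy e e0.
have X0 := cnorm_ge0 x.
have x_pos : 0 < 2 * (cnorm x + 1) by lra.
have [t St ht] := Sy _ (divr_gt0 e0 x_pos).
have T0 := cnorm_ge0 t.
have t_pos : 0 < 2 * (cnorm t + 1) by lra.
have [s Ss hs] := Sx _ (divr_gt0 e0 t_pos).
rewrite ltr_pdivlMr // in ht; rewrite ltr_pdivlMr // in hs.
have a0 := cnorm_ge0 (s - x); have b0 := cnorm_ge0 (t - y).
have h1 := cnormM (s - x) t; have h2 := cnormM x (t - y).
have h3 := cnormM t (s - x); have h4 := cnormM (t - y) x.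
exists s, t; split => //.
- have -> : cmul s t - cmul x y = cmul (s - x) t + cmul x (t - y).
    by rewrite cmulBl cmulBr addrA subrK.
  by apply: (le_lt_trans (cnormD _ _)); lra.
- have -> : cmul t s - cmul y x = cmul t (s - x) + cmul (t - y) x.
    by rewrite cmulBl cmulBr addrA subrK.
  by apply: (le_lt_trans (cnormD _ _)); lra.
Qed.

Lemma norm_closure_star_subalg S : star_subalg S -> star_subalg (norm_closure S).
Proof.
move=> hS; split.
- by apply: sub_norm_closure; apply: star_subalg1.
- move=> x y Sx Sy e e0.
  have [s Ss hs] := Sx _ (divr_gt0 e0 (ltr0n _ 2)).
  have [t St ht] := Sy _ (divr_gt0 e0 (ltr0n _ 2)).
  exists (s + t); first exact: star_subalgD.
  rewrite opprD addrACA.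
  by apply: (le_lt_trans (cnormD _ _)); lra.
- move=> c x Sx e e0.
  have c0 := normc_ge0 c.
  have c_pos : 0 < Normc.normc c + 1 by lra.
  have [s Ss hs] := Sx _ (divr_gt0 e0 c_pos).
  exists (c *: s); first exact: star_subalgZ.
  rewrite -scalerBr cnormZ; rewrite ltr_pdivlMr // in hs.
  by have := cnorm_ge0 (s - x); lra.
- move=> x y Sx Sy e e0.
  have [s [t [Ss St st _]]] := norm_closure_mul_approx Sx Sy e0.
  by exists (cmul s t) => //; apply: star_subalgM.
- move=> x Sx e e0; have [s Ss hs] := Sx _ e0.
  by exists (cinv s); [apply: star_subalg_inv | rewrite -cinvB cnorm_cinv].
Qed.

Lemma norm_closure_lim_closed S : lim_closed (norm_closure S).
Proof.
move=> u l Su ul e e0.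
have [N hN] := ul _ (divr_gt0 e0 (ltr0n _ 2)).
have [s Ss hs] := Su N _ (divr_gt0 e0 (ltr0n _ 2)).
exists s => //; apply: (le_lt_trans (cnorm_tri _ (u N) _)).
by have := hN N (leqnn N); lra.
Qed.

Lemma norm_closure_commuting S : commuting S -> commuting (norm_closure S).
Proof.
move=> cS x y Sx Sy; apply/eqP; rewrite -subr_eq0; apply/eqP.
apply: eq0_cnorm_small => e e0.
have [s [t [Ss St st ts]]] := norm_closure_mul_approx Sx Sy (divr_gt0 e0 (ltr0n _ 2)).
have -> : cmul x y - cmul y x = - (cmul s t - cmul x y) + (cmul t s - cmul y x).
  by rewrite (cS s t) // opprB addrA subrK.
by apply: (le_lt_trans (cnormD _ _)); rewrite cnormN; lra.
Qed.

Lemma norm_closure_comm_subalg S :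
  star_subalg S -> commuting S -> comm_subalg (norm_closure S).
Proof.
move=> hS cS; apply/comm_subalgE; split.
- exact: norm_closure_star_subalg.
- exact: norm_closure_lim_closed.
- exact: norm_closure_commuting.
Qed.

End Closure.

Section Generated.
Context {R : realType} (A : cstar R).
Implicit Types (a x y : A) (S T : set A).

Definition star_gen a : set A := [set x | forall T, star_subalg T -> T a -> T x].

Lemma star_gen_subalg a : star_subalg (star_gen a).
Proof.
split.
- move=> T hT _; exact: (star_subalg1 hT).
- move=> x y gx gy T hT Ta; exact: (star_subalgD hT (gx T hT Ta) (gy T hT Ta)).
- move=> c x gx T hT Ta; exact: (star_subalgZ hT c (gx T hT Ta)).
- move=> x y gx gy T hT Ta; exact: (star_subalgM hT (gx T hT Ta) (gy T hT Ta)).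
- move=> x gx T hT Ta; exact: (star_subalg_inv hT (gx T hT Ta)).
Qed.

Lemma star_gen_min a T : star_subalg T -> T a -> star_gen a `<=` T.
Proof. by move=> hT Ta x; apply. Qed.

Definition commutant S : set A := [set x | forall y, S y -> cmul x y = cmul y x].

Lemma commutant_star_subalg S :
  (forall y, S y -> S (cinv y)) -> star_subalg (commutant S).
Proof.
move=> SI; split.
- by move=> y _; rewrite cmul1l cmul1r.
- by move=> x y cx cy z Sz; rewrite cmulDl cmulDr cx ?cy.
- by move=> c x cx z Sz; rewrite cmulZl cmulZr cx.
- by move=> x y cx cy z Sz; rewrite -cmulA cy // !cmulA cx.
- move=> x cx z Sz.
  by have := congr1 (@cinv _ _) (cx _ (SI _ Sz)); rewrite !cinvM cinvK => ->.
Qed.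

(* [a] and [a^*] commute, so both generate the same commutant, which contains
   the *-algebra generated by [a]; that algebra is thus in its own commutant. *)
Lemma star_gen_commuting a : @normal_elts _ A a -> commuting (star_gen a).
Proof.
move=> na.
pose Sa := [set y | y = a \/ y = cinv a].
have SaI : forall y, Sa y -> Sa (cinv y).
  by move=> y [->|->]; [right | left; rewrite cinvK].
have gen_Sa : star_gen a `<=` commutant Sa.
  apply: star_gen_min; first exact: commutant_star_subalg SaI.
  by move=> y [->|->] //; apply: na.
have gen_gen : star_gen a `<=` commutant (star_gen a).
  apply: star_gen_min.
    exact: commutant_star_subalg (star_subalg_inv (star_gen_subalg a)).
  by move=> y /gen_Sa ay; rewrite (ay a) //; left.
by move=> x y gx gy; exact: gen_gen x gx y gy.
Qed.

Lemma normal_in_comm_subalg a :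
  @normal_elts _ A a -> exists C, comm_subalg C /\ C a.
Proof.
move=> na; exists (norm_closure (star_gen a)); split.
- exact: norm_closure_comm_subalg (star_gen_subalg a) (star_gen_commuting na).
- by apply: sub_norm_closure => T.
Qed.

End Generated.

Section Image.
Context {R : realType} (A B : cstar R) (f : chom A B).

Lemma image_star_subalg C : star_subalg C -> star_subalg (chom_fun f @` C).
Proof.
have [f1 f2 f3 f4 f5] : is_chom (chom_fun f) := proj2_sig f.
move=> hC; split.
- by exists (cone A); [apply: star_subalg1 | rewrite f4].
- by move=> _ _ [c Cc <-] [d Cd <-]; exists (c + d); [apply: star_subalgD | rewrite f1].
- by move=> k _ [c Cc <-]; exists (k *: c); [apply: star_subalgZ | rewrite f2].
- by move=> _ _ [c Cc <-] [d Cd <-]; exists (cmul c d); [apply: star_subalgM | rewrite f3].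
- by move=> _ [c Cc <-]; exists (cinv c); [apply: star_subalg_inv | rewrite f5].
Qed.

Lemma image_commuting C : commuting C -> commuting (chom_fun f @` C).
Proof.
have [_ _ f3 _ _] : is_chom (chom_fun f) := proj2_sig f.
by move=> cC _ _ [c Cc <-] [d Cd <-]; rewrite -!f3 cC.
Qed.

End Image.

Lemma chom_ext {R : realType} (A B : cstar R) (f g : chom A B) :
  chom_fun f =1 chom_fun g -> f = g.
Proof. by case: f g => f hf [g hg] /= /funext fg; apply: eq_exist. Qed.

Section SubalgebraCStar.
Context {R : realType} (A : cstar R) (C : set A) (hC : comm_subalg C).

Let C_star : star_subalg C. Proof. by case/comm_subalgE: hC. Qed.
Let C_lim : lim_closed C. Proof. by case/comm_subalgE: hC. Qed.
Let C_comm : commuting C. Proof. by case/comm_subalgE: hC. Qed.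

Definition subalg_type := {x : A | C x}.
HB.instance Definition _ := gen_eqMixin subalg_type.
HB.instance Definition _ := gen_choiceMixin subalg_type.

Lemma subalg_val_inj (x y : subalg_type) : sval x = sval y -> x = y.
Proof. by case: x y => x hx [y hy] /= xy; apply: eq_exist. Qed.

Definition sub_zero : subalg_type := exist _ 0 (star_subalg0 C_star).
Definition sub_opp (x : subalg_type) : subalg_type :=
  exist _ (- sval x) (star_subalgN C_star (proj2_sig x)).
Definition sub_add (x y : subalg_type) : subalg_type :=
  exist _ (sval x + sval y) (star_subalgD C_star (proj2_sig x) (proj2_sig y)).
Definition sub_scale (c : R[i]) (x : subalg_type) : subalg_type :=
  exist _ (c *: sval x) (star_subalgZ C_star c (proj2_sig x)).
Definition sub_mul (x y : subalg_type) : subalg_type :=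
  exist _ (cmul (sval x) (sval y)) (star_subalgM C_star (proj2_sig x) (proj2_sig y)).
Definition sub_one : subalg_type := exist _ (cone A) (star_subalg1 C_star).
Definition sub_cinv (x : subalg_type) : subalg_type :=
  exist _ (cinv (sval x)) (star_subalg_inv C_star (proj2_sig x)).
Definition sub_norm (x : subalg_type) : R := cnorm (sval x).

Lemma sub_addA : associative sub_add.
Proof. by move=> *; apply: subalg_val_inj; rewrite /= addrA. Qed.
Lemma sub_addC : commutative sub_add.
Proof. by move=> *; apply: subalg_val_inj; rewrite /= addrC. Qed.
Lemma sub_add0 : left_id sub_zero sub_add.
Proof. by move=> *; apply: subalg_val_inj; rewrite /= add0r. Qed.
Lemma sub_addN : left_inverse sub_zero sub_opp sub_add.
Proof. by move=> *; apply: subalg_val_inj; rewrite /= addNr. Qed.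
HB.instance Definition _ :=
  GRing.isZmodule.Build subalg_type sub_addA sub_addC sub_add0 sub_addN.

Lemma sub_scaleA a b v : sub_scale a (sub_scale b v) = sub_scale (a * b) v.
Proof. by apply: subalg_val_inj; rewrite /= scalerA. Qed.
Lemma sub_scale1 : left_id 1 sub_scale.
Proof. by move=> *; apply: subalg_val_inj; rewrite /= scale1r. Qed.
Lemma sub_scaleDr : right_distributive sub_scale +%R.
Proof. by move=> *; apply: subalg_val_inj; rewrite /= scalerDr. Qed.
Lemma sub_scaleDl v : {morph sub_scale^~ v : a b / a + b}.
Proof. by move=> *; apply: subalg_val_inj; rewrite /= scalerDl. Qed.
HB.instance Definition _ := GRing.Zmodule_isLmodule.Build R[i] subalg_type
  sub_scaleA sub_scale1 sub_scaleDr sub_scaleDl.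

Definition subalg_cstar : cstar R.
refine (@CStar R subalg_type sub_mul sub_one sub_cinv sub_norm
  _ _ _ _ _ _ _ _ _ _ _ _ _ _ _ _ _).
- by move=> *; apply: subalg_val_inj; rewrite /= cmulA.
- by move=> *; apply: subalg_val_inj; rewrite /= cmul1l.
- by move=> *; apply: subalg_val_inj; rewrite /= cmul1r.
- by move=> *; apply: subalg_val_inj; rewrite /= cmulDl.
- by move=> *; apply: subalg_val_inj; rewrite /= cmulDr.
- by move=> *; apply: subalg_val_inj; rewrite /= cmulZl.
- by move=> *; apply: subalg_val_inj; rewrite /= cmulZr.
- by move=> *; apply: subalg_val_inj; rewrite /= cinvD.
- by move=> *; apply: subalg_val_inj; rewrite /= cinvZ.
- by move=> *; apply: subalg_val_inj; rewrite /= cinvK.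
- by move=> *; apply: subalg_val_inj; rewrite /= cinvM.
- by move=> x /cnorm_eq0 x0; apply: subalg_val_inj; rewrite x0.
- by move=> x y; apply: cnormD.
- by move=> c x; apply: cnormZ.
- by move=> x y; apply: cnormM.
- by move=> x; apply: cnorm_cstar.
- move=> u u_cauchy.
  have [l ul] := ccomplete (u := fun n => sval (u n)) u_cauchy.
  by exists (exist _ l (C_lim (fun n => proj2_sig (u n)) ul)).
Defined.

Lemma subalg_cstar_comm : ccommutative subalg_cstar.
Proof. by move=> x y; apply: subalg_val_inj; apply: C_comm; apply: proj2_sig. Qed.

Lemma subalg_normal : @normal_elts _ subalg_cstar = setT.
Proof. by apply/seteqP; split=> // x _; exact: subalg_cstar_comm. Qed.

Lemma is_chom_subalg_incl : is_chom (fun x : subalg_cstar => sval x).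
Proof. by split. Qed.

Definition subalg_incl : chom subalg_cstar A := exist _ _ is_chom_subalg_incl.

Definition subalg_lift (M : set subalg_cstar) : set A :=
  [set a | exists h : C a, M (exist C a h)].

Lemma subalg_liftE M a (h : C a) : subalg_lift M a <-> M (exist C a h).
Proof. by split=> [[h' Mh'] | Mh]; [rewrite (Prop_irrelevance h h') | exists h]. Qed.

Lemma subalg_lift_restr J :
  subalg_lift (chom_fun subalg_incl @^-1` J) = J `&` C.
Proof. by apply/seteqP; split=> [a [Ca Ja] | a [Ja Ca]]; [split | exists Ca]. Qed.

Lemma subalg_restr_lift M : chom_fun subalg_incl @^-1` subalg_lift M = M.
Proof. by apply/seteqP; split=> -[a Ca] /= Ma; apply/(subalg_liftE M Ca). Qed.

Lemma is_ideal_lift M : is_ideal_of [set: subalg_cstar] M -> is_ideal_of C (subalg_lift M).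
Proof.
case=> _ M0 MB ML MR; split.
- by move=> a [].
- by exists (star_subalg0 C_star).
- move=> x y [hx Mx] [hy My].
  apply/(subalg_liftE _ (star_subalgD C_star hx (star_subalgN C_star hy))).
  exact: (MB _ _ Mx My).
- move=> c x Cc [hx Mx].
  apply/(subalg_liftE _ (star_subalgM C_star Cc hx)).
  exact: (ML (exist C c Cc) _ I Mx).
- move=> c x Cc [hx Mx].
  apply/(subalg_liftE _ (star_subalgM C_star hx Cc)).
  exact: (MR (exist C c Cc) _ I Mx).
Qed.

Lemma is_ideal_restr J : is_ideal_of C J ->
  is_ideal_of [set: subalg_cstar] (chom_fun subalg_incl @^-1` J).
Proof.
case=> _ J0 JB JL JR; split => //.
- by move=> x y; apply: JB.
- by move=> c x _ Jx; apply: JL => //; apply: proj2_sig.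
- by move=> c x _ Jx; apply: JR => //; apply: proj2_sig.
Qed.

(* Ideals of the subalgebra and ideals of the ring [C] correspond under lifting
   and restriction, so maximality transfers. *)
Lemma max_ideal_lift M : is_max_ideal M -> is_max_ideal_of C (subalg_lift M).
Proof.
case=> hM MnT Mmax; split; first exact: is_ideal_lift.
  move=> MC; apply: MnT; rewrite -(subalg_restr_lift M) MC.
  by apply/seteqP; split=> // -[a Ca].
move=> J hJ MJ.
have MJ' : M `<=` chom_fun subalg_incl @^-1` J.
  by move=> [a Ca] Ma; apply: MJ; exists Ca.
have JE : J = subalg_lift (chom_fun subalg_incl @^-1` J).
  by rewrite subalg_lift_restr setIidl //; case: hJ.
case: (Mmax _ (is_ideal_restr hJ) MJ') => E; rewrite JE E; [by left | right].
by rewrite -[C]setTI; apply: (subalg_lift_restr setT).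
Qed.

End SubalgebraCStar.
Arguments subalg_lift {R A C} hC M.
Arguments subalg_cstar_comm {R A C} hC x y.

Section Restriction.
Context {R : realType} (A B : cstar R) (f : chom A B) (C : set A) (D : set B)
  (hC : comm_subalg C) (hD : comm_subalg D) (CD : forall c, C c -> D (chom_fun f c)).

Definition chom_restrict_fun (x : subalg_cstar hC) : subalg_cstar hD :=
  exist _ (chom_fun f (sval x)) (CD (proj2_sig x)).

Lemma is_chom_restrict : is_chom chom_restrict_fun.
Proof.
have [f1 f2 f3 f4 f5] : is_chom (chom_fun f) := proj2_sig f.
split.
- by move=> x y; apply: subalg_val_inj; rewrite /= f1.
- by move=> c x; apply: subalg_val_inj; rewrite /= f2.
- by move=> x y; apply: subalg_val_inj; rewrite /= f3.
- by apply: subalg_val_inj; rewrite /= f4.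
- by move=> x; apply: subalg_val_inj; rewrite /= f5.
Qed.

Definition chom_restrict : chom (subalg_cstar hC) (subalg_cstar hD) :=
  exist _ _ is_chom_restrict.

Lemma chom_restrictE :
  chom_comp (subalg_incl hD) chom_restrict = chom_comp f (subalg_incl hC).
Proof. by apply: chom_ext. Qed.

Lemma subalg_lift_restrict (N : set (subalg_cstar hD)) :
  subalg_lift hC (chom_fun chom_restrict @^-1` N) =
  chom_fun f @^-1` subalg_lift hD N `&` C.
Proof.
apply/seteqP; split=> [a [Ca Na] | a [fa Ca]]; first by split=> //; exists (CD Ca).
by exists Ca; apply/(subalg_liftE N (CD Ca)).
Qed.

End Restriction.

Section KanExtension.
Context {R : realType} (F : @cfunctor R)
  (eta : forall A : cstar R, ccommutative A -> Fobj F A -> {M : set A | is_max_ideal M})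
  (heta : nat_to_Gelf eta).

Definition eta_on (A : cstar R) (C : set A) (hC : comm_subalg C) (x : Fobj F A)
    : set (subalg_cstar hC) :=
  sval (eta (subalg_cstar_comm hC) (Fmap (subalg_incl hC) x)).
Arguments eta_on {A C} hC x _.

Definition eta_trace (A : cstar R) (C : set A) (hC : comm_subalg C) (x : Fobj F A)
    : set A :=
  subalg_lift hC (eta_on hC x).

Lemma eta_trace_max (A : cstar R) (C : set A) (hC : comm_subalg C) x :
  is_max_ideal_of C (eta_trace hC x).
Proof. exact: max_ideal_lift (proj2_sig (eta _ _)). Qed.

Lemma eta_trace_subset (A : cstar R) (C : set A) (hC : comm_subalg C) x :
  eta_trace hC x `<=` C.
Proof. by move=> a []. Qed.

Lemma eta_on_restrict (A B : cstar R) (f : chom A B) (C : set A) (D : set B)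
    (hC : comm_subalg C) (hD : comm_subalg D) (CD : forall c, C c -> D (chom_fun f c))
    (y : Fobj F B) :
  eta_on hC (Fmap f y) = chom_fun (chom_restrict hC hD CD) @^-1` eta_on hD y.
Proof.
rewrite /eta_on -Fmap_comp -(chom_restrictE hC hD CD) Fmap_comp.
by rewrite (heta _ (subalg_cstar_comm hD)).
Qed.

Lemma eta_trace_sub (A : cstar R) (C D : set A) (hC : comm_subalg C) (hD : comm_subalg D)
    (CD : C `<=` D) x :
  eta_trace hC x = eta_trace hD x `&` C.
Proof.
have := eta_on_restrict (f := chom_id A) hC hD CD x; rewrite Fmap_id => E.
by rewrite /eta_trace E subalg_lift_restrict.
Qed.

Lemma eta_trace_coherent (A : cstar R) (C D : set A)
    (hC : comm_subalg C) (hD : comm_subalg D) x :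
  eta_trace hD x `&` C `<=` eta_trace hC x.
Proof.
move=> a [ta Ca].
have hCD := comm_subalgI hC hD.
have Da : D a := eta_trace_subset ta.
have : eta_trace hCD x a by rewrite (eta_trace_sub hCD hD (@subIsetr _ C D)).
by rewrite (eta_trace_sub hCD hC (@subIsetl _ C D)) => -[].
Qed.

Definition partial_ideal (A : cstar R) (x : Fobj F A) : set A :=
  [set a | exists C (hC : comm_subalg C), eta_trace hC x a].

Lemma partial_idealI (A : cstar R) (C : set A) (hC : comm_subalg C) x :
  partial_ideal x `&` C = eta_trace hC x.
Proof.
apply/seteqP; split=> a.
- by move=> [[D [hD ta]] Ca]; apply: (eta_trace_coherent hC (conj ta Ca)).
- by move=> ta; split; [exists C, hC | apply: eta_trace_subset ta].
Qed.

Lemma partial_ideal_normal (A : cstar R) (x : Fobj F A) :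
  partial_ideal x `<=` @normal_elts _ A.
Proof. by move=> a [C [hC [Ca _]]]; apply: comm_subalg_normal hC Ca. Qed.

Lemma partial_ideal_pmi (A : cstar R) (x : Fobj F A) :
  is_partial_max_ideal (partial_ideal x).
Proof.
split=> [|C hC]; first exact: partial_ideal_normal.
by rewrite partial_idealI; apply: eta_trace_max.
Qed.

Lemma partial_ideal_unique (A : cstar R) (x : Fobj F A) (X : set A) :
  X `<=` @normal_elts _ A ->
  (forall C (hC : comm_subalg C), X `&` C = eta_trace hC x) ->
  X = partial_ideal x.
Proof.
move=> XN XC; apply/seteqP; split=> a.
- move=> Xa; have [C [hC Ca]] := normal_in_comm_subalg (XN a Xa).
  by exists C, hC; rewrite -XC.
- by move=> [C [hC]]; rewrite -XC => -[].
Qed.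

(* The closure of the image of [C] is the commutative C*-subalgebra of [B]
   along which naturality of [eta] is used. *)
Lemma eta_trace_pullback (A B : cstar R) (f : chom A B) (y : Fobj F B)
    (C : set A) (hC : comm_subalg C) :
  eta_trace hC (Fmap f y) = chom_fun f @^-1` partial_ideal y `&` C.
Proof.
have [C_star _ C_comm] := (comm_subalgE C).1 hC.
pose D := norm_closure (chom_fun f @` C).
have hD : comm_subalg D :=
  norm_closure_comm_subalg (image_star_subalg f C_star) (image_commuting C_comm).
have CD c : C c -> D (chom_fun f c) by move=> Cc; apply: sub_norm_closure; exists c.
rewrite /eta_trace (eta_on_restrict hC hD CD) subalg_lift_restrict.
rewrite -/(eta_trace hD y) -(partial_idealI hD).
apply/seteqP; split=> a [fa Ca]; split=> //; first by case: fa.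
by split=> //; apply: CD.
Qed.

Definition kan_delta (A : cstar R) (x : Fobj F A) : {I : set A | is_partial_max_ideal I} :=
  exist _ (partial_ideal x) (partial_ideal_pmi x).

Lemma kan_delta_nat : nat_to_dGelf kan_delta.
Proof.
move=> A B f y /=; apply/seteqP; split=> a.
- move=> pa; split; last exact: partial_ideal_normal pa.
  by case: pa => C [hC]; rewrite eta_trace_pullback => -[].
- move=> [fa na]; have [C [hC Ca]] := normal_in_comm_subalg na.
  by exists C, hC; rewrite eta_trace_pullback.
Qed.

Lemma kan_delta_eta (A : cstar R) (hA : ccommutative A) (x : Fobj F A) :
  sval (kan_delta x) = sval (eta hA x).
Proof.
rewrite /= -[LHS]setIT (partial_idealI (comm_subalgT hA)) /eta_trace /eta_on.
by rewrite (heta _ hA) subalg_lift_restr setIT.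
Qed.

Lemma kan_delta_unique
    (delta : forall A : cstar R, Fobj F A -> {I : set A | is_partial_max_ideal I}) :
  nat_to_dGelf delta ->
  (forall (A : cstar R) (hA : ccommutative A) (x : Fobj F A),
      sval (delta A x) = sval (eta hA x)) ->
  forall (A : cstar R) (x : Fobj F A), sval (delta A x) = sval (kan_delta x).
Proof.
move=> delta_nat delta_eta A x.
apply: partial_ideal_unique => [|C hC]; first exact: (proj2_sig (delta A x)).1.
have := delta_nat _ _ (subalg_incl hC) x.
rewrite (delta_eta _ (subalg_cstar_comm hC)) subalg_normal setIT => E.
by rewrite /eta_trace /eta_on E subalg_lift_restr.
Qed.

End KanExtension.

Theorem theorem5p6 (R : realType) (F : @cfunctor R)
  (eta : forall A : cstar R, ccommutative A -> Fobj F A -> {M : set A | is_max_ideal M}) :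
  nat_to_Gelf eta ->
  exists delta : forall A : cstar R, Fobj F A -> {I : set A | is_partial_max_ideal I},
    [/\ nat_to_dGelf delta,
        (forall (A : cstar R) (hA : ccommutative A) (x : Fobj F A),
            proj1_sig (delta A x) = proj1_sig (eta A hA x)) &
        (forall delta' : forall A : cstar R, Fobj F A -> {I : set A | is_partial_max_ideal I},
            nat_to_dGelf delta' ->
            (forall (A : cstar R) (hA : ccommutative A) (x : Fobj F A),
                proj1_sig (delta' A x) = proj1_sig (eta A hA x)) ->
            forall (A : cstar R) (x : Fobj F A),
              proj1_sig (delta' A x) = proj1_sig (delta A x))].
Proof.
move=> heta; exists (kan_delta heta); split.
- exact: kan_delta_nat.
- exact: kan_delta_eta.
- exact: kan_delta_unique.
Qed.
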